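(* Let $\Pi$ be a policy class, $\pi_G$ a fixed goal-conditioned policy, $\rho^{e_1},\dots,\rho^{e_N}$ joint distributions over observations and goals (''source'' distributions, $E=\{e_1,\dots,e_N\}$) and $\rho^t$ a ''target'' joint distribution. Write $\epsilon^{e_i}=\epsilon^{\rho^{e_i}}$ and $\epsilon^t=\epsilon^{\rho^t}$. For weights $\alpha=(\alpha_1,\dots,\alpha_N)$ with $\alpha_i\in[0,1]$, $\sum_i\alpha_i=1$, let $$\lambda_\alpha=\inf_{\pi'\in\Pi}\Big[\sum_{i=1}^N\alpha_i\epsilon^{e_i}(\pi'\|\pi_G)+\epsilon^t(\pi'\|\pi_G)\Big],$$ let $\delta_E=\max_{e,e'\in E}d_{\Pi\Delta\Pi}(\rho^e,\rho^{e'})$, and let $B=B(\delta_E,E\mid\Pi)$. Then for every $\pi\in\Pi$, $$\epsilon^t(\pi\|\pi_G)\le \inf_\alpha\Big[\sum_{i=1}^N\alpha_i\epsilon^{e_i}(\pi\|\pi_G)+\lambda_\alpha\Big]+\delta_E+\inf_{\rho\in B}d_{\Pi\Delta\Pi}(\rho,\rho^t).$$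
   Context: A goal-conditioned policy is a conditional distribution $\pi(a\mid x,g)$ over actions given an observation $x$ and goal $g$. $D_{\mathrm{TV}}(\pi_1(\cdot\mid x,g)\|\pi_2(\cdot\mid x,g))=\sup_{A'}|\pi_1(A'\mid x,g)-\pi_2(A'\mid x,g)|$ over measurable sets of actions $A'$. For a joint distribution $\rho(x,g)$, $\epsilon^{\rho}(\pi_1\|\pi_2)=\mathbb{E}_{(x,g)\sim\rho}[D_{\mathrm{TV}}(\pi_1(\cdot\mid x,g)\|\pi_2(\cdot\mid x,g))]$. For a policy class $\Pi$, $d_{\Pi\Delta\Pi}(\rho,\rho')=\sup_{\pi,\pi'\in\Pi}|\epsilon^{\rho}(\pi\|\pi')-\epsilon^{\rho'}(\pi\|\pi')|$. The characteristic set $B(\delta,E\mid\Pi)$ of a collection of joint distributions $\{\rho^{e_i}\}_{e_i\in E}$ is the set of all joint distributions $\rho(x,g)$ with $d_{\Pi\Delta\Pi}(\rho,\rho^{e_i})\le\delta$ for every $e_i\in E$. *)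

From HB Require Import structures.
From mathcomp Require Import all_boot all_order all_algebra.
From mathcomp Require Import all_classical all_reals all_analysis.
From mathcomp Require Import measurable_realfun.
Set Implicit Arguments. Unset Strict Implicit. Unset Printing Implicit Defensive.
Import Order.TTheory GRing.Theory Num.Theory.
Local Open Scope classical_set_scope.
Local Open Scope ring_scope.
Local Open Scope ereal_scope.

Section PolicyDefs.
Context {d1 d2 d3 : measure_display} {X : measurableType d1}
  {G : measurableType d2} {A : measurableType d3} {R : realType}.

Notation policy := (X * G -> probability A R).
Notation joint := (probability (X * G)%type R).

Definition dTV (P Q : probability A R) : \bar R :=
  ereal_sup [set `|P B - Q B| | B in measurable].

Definition eps (rho : joint) (pi1 pi2 : policy) : \bar R :=
  \int[rho]_z dTV (pi1 z) (pi2 z).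

Definition dPiPi (Pi : set policy) (rho rho' : joint) : \bar R :=
  ereal_sup [set `|eps rho p p' - eps rho' p p'| | p in Pi & p' in Pi].

Definition charset (Pi : set policy) (delta : \bar R) (N : nat)
  (rhoE : 'I_N -> joint) : set joint :=
  [set rho | forall i, dPiPi Pi rho (rhoE i) <= delta].

Definition deltaE (Pi : set policy) (N : nat) (rhoE : 'I_N -> joint) : \bar R :=
  ereal_sup [set dPiPi Pi (rhoE i) (rhoE j) | i in [set: 'I_N] & j in [set: 'I_N]].

Definition weights (N : nat) : set ('I_N -> R) :=
  [set alpha | (forall i, (0 <= alpha i <= 1)%R) /\ (\sum_(i < N) alpha i)%R = 1%R].

Definition lambda (Pi : set policy) (piG : policy) (N : nat)
  (rhoE : 'I_N -> joint) (rhot : joint) (alpha : 'I_N -> R) : \bar R :=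
  ereal_inf [set (\sum_(i < N) (alpha i)%:E * eps (rhoE i) p piG) + eps rhot p piG
            | p in Pi].

End PolicyDefs.

From HB Require Import structures.
From mathcomp Require Import all_boot all_order all_algebra.
From mathcomp Require Import all_classical all_reals all_analysis.
From mathcomp Require Import measurable_realfun.
From mathcomp Require Import lra.
Import Order.TTheory GRing.Theory Num.Theory.
Local Open Scope classical_set_scope.
Local Open Scope ring_scope.
Local Open Scope ereal_scope.

(* For any p in Pi, the triangle inequality for the expected total variation
   through p gives eps^t(pi, piG) <= eps^t(pi, p) + eps^t(p, piG).  Moving from
   rho^t to any rho in B costs d(rho, rho^t) on eps(pi, p), and moving from rho
   to each source rho^{e_i} costs at most delta_E; averaging these source bounds
   with the weights alpha and splitting eps^{e_i}(pi, p) through piG yields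
   sum_i alpha_i eps^{e_i}(pi, piG) + [sum_i alpha_i eps^{e_i}(p, piG) + eps^t(p, piG)]
   + delta_E + d(rho, rho^t).  Taking infima over p, alpha and rho concludes. *)

Lemma abse_subC (R : realDomainType) (x y : \bar R) : `|x - y| = `|y - x|.
Proof. by case: x y => [x| |] [y| |] //=; rewrite distrC. Qed.

Section TotalVariation.
Context {d : measure_display} {A : measurableType d} {R : realType}.
Implicit Types P Q S : probability A R.

Lemma probabilityE P {B} : measurable B -> exists2 p : R, P B = p%:E & (0 <= p <= 1)%R.
Proof.
move=> mB; exists (fine (P B)); first by rewrite fineK ?fin_num_measure.
rewrite fine_ge0 //= -lee_fin fineK ?fin_num_measure //.
exact: probability_le1.
Qed.

Lemma abs_sub_le_dTV P Q {B} : measurable B -> `|P B - Q B| <= dTV P Q.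
Proof. by move=> mB; apply: ereal_sup_ubound; exists B. Qed.

Lemma dTV_ge0 P Q : 0 <= dTV P Q.
Proof. by have := abs_sub_le_dTV P Q measurable0; rewrite !measure0 subee // abse0. Qed.

Lemma dTV_le1 P Q : dTV P Q <= 1.
Proof.
apply: ge_ereal_sup => _ [B mB <-].
have [p -> /andP[p0 p1]] := probabilityE P mB.
have [q -> /andP[q0 q1]] := probabilityE Q mB.
by rewrite -EFinB abse_EFin lee_fin ler_norml; apply/andP; split; lra.
Qed.

Lemma dTVC P Q : dTV P Q = dTV Q P.
Proof.
rewrite /dTV; congr ereal_sup; apply: eq_imagel => B mB.
have [p -> _] := probabilityE P mB; have [q -> _] := probabilityE Q mB.
by rewrite -!EFinB !abse_EFin distrC.
Qed.

Lemma dTV_triangle P Q S : dTV P Q <= dTV P S + dTV S Q.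
Proof.
apply: ge_ereal_sup => _ [B mB <-].
apply: le_trans (leeD (abs_sub_le_dTV P S mB) (abs_sub_le_dTV S Q mB)).
have [p -> _] := probabilityE P mB; have [q -> _] := probabilityE Q mB.
have [s -> _] := probabilityE S mB.
by rewrite -!EFinB !abse_EFin -EFinD lee_fin ler_distD.
Qed.

End TotalVariation.

Section Weights.
Context {R : realType} {N : nat}.
Implicit Types (alpha : 'I_N -> R) (y : 'I_N -> \bar R).

Lemma weights_ge0 alpha : weights alpha -> forall i, (0 <= alpha i)%R.
Proof. by move=> [alpha01 _] i; case/andP: (alpha01 i). Qed.

Lemma weights_sume_cst alpha (c : \bar R) :
  weights alpha -> \sum_(i < N) (alpha i)%:E * c = c.
Proof.
move=> walpha; rewrite -ge0_sume_distrl => [|i _]; last by rewrite lee_fin weights_ge0.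
by rewrite sumEFin walpha.2 mul1e.
Qed.

Lemma le_weighted_sume alpha x y :
  weights alpha -> (forall i, x <= y i) -> x <= \sum_(i < N) (alpha i)%:E * y i.
Proof.
move=> walpha xy; rewrite -{1}(weights_sume_cst alpha x walpha).
by apply: lee_sum => i _; apply: lee_wpmul2l; rewrite ?lee_fin ?weights_ge0.
Qed.

Lemma weighted_sumeD_cst alpha y (c : \bar R) : weights alpha ->
  (forall i, 0 <= y i) -> 0 <= c ->
  \sum_(i < N) (alpha i)%:E * (y i + c) = \sum_(i < N) (alpha i)%:E * y i + c.
Proof.
move=> walpha y0 c0; rewrite -[in RHS](weights_sume_cst alpha c walpha) -big_split /=.
by apply: eq_bigr => i _; rewrite ge0_muleDr.
Qed.

Lemma weighted_sume_ge0 alpha y :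
  weights alpha -> (forall i, 0 <= y i) -> 0 <= \sum_(i < N) (alpha i)%:E * y i.
Proof.
move=> walpha y0; apply: sume_ge0 => i _.
by apply: mule_ge0; rewrite ?lee_fin ?weights_ge0.
Qed.

End Weights.

Section ExpectedTotalVariation.
Context {d1 d2 d3 : measure_display} {X : measurableType d1}
  {G : measurableType d2} {A : measurableType d3} {R : realType}.
Local Notation policy := (X * G -> probability A R).
Local Notation joint := (probability (X * G)%type R).
Implicit Types (rho : joint) (p q s : policy).

Definition measurable_dTV p q :=
  measurable_fun [set: X * G] (fun z => dTV (p z) (q z) : \bar R).

Lemma eps_ge0 rho p q : 0 <= eps rho p q.
Proof. by apply: integral_ge0 => z _; exact: dTV_ge0. Qed.

Lemma eps_fin_num rho p q : measurable_dTV p q -> eps rho p q \is a fin_num.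
Proof.
move=> mpq; rewrite ge0_fin_numE ?eps_ge0 //; apply: (@le_lt_trans _ _ 1); last exact: ltey.
apply: le_trans (ge0_le_integral (f2 := cst 1) _ _ _ _ _ _) _ => //.
- by move=> z _; exact: dTV_ge0.
- by move=> z _; exact: dTV_le1.
- by rewrite integral_cst // mul1e; exact: probability_le1.
Qed.

Lemma epsC rho p q : eps rho p q = eps rho q p.
Proof. by apply: eq_integral => z _; exact: dTVC. Qed.

Lemma eps_triangle rho {p q s} :
  measurable_dTV p q -> measurable_dTV p s -> measurable_dTV s q ->
  eps rho p q <= eps rho p s + eps rho s q.
Proof.
move=> mpq mps msq; rewrite /eps -ge0_integralD //; last 2 first.
- by move=> z _; exact: dTV_ge0.
- by move=> z _; exact: dTV_ge0.
apply: ge0_le_integral => //.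
- by move=> z _; exact: dTV_ge0.
- exact: emeasurable_funD.
- by move=> z _; exact: dTV_triangle.
Qed.

Lemma dPiPi_ge0 {Pi : set policy} {p} rho rho' : Pi p -> 0 <= dPiPi Pi rho rho'.
Proof.
move=> Pip; apply: le_trans (ereal_sup_ubound _); last by exists p => //; exists p.
exact: abse_ge0.
Qed.

Lemma dPiPiC (Pi : set policy) rho rho' : dPiPi Pi rho rho' = dPiPi Pi rho' rho.
Proof.
rewrite /dPiPi; congr ereal_sup; apply/seteqP; split=> _ [p Pip [q Piq <-]];
  by exists p => //; exists q => //; rewrite abse_subC.
Qed.

Lemma eps_le_dPiPi {Pi : set policy} rho rho' {p q} : Pi p -> Pi q ->
  measurable_dTV p q -> eps rho p q <= eps rho' p q + dPiPi Pi rho rho'.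
Proof.
move=> Pip Piq mpq; rewrite -leeBlDl ?eps_fin_num //.
by apply: le_trans (lee_abs _) _; apply: ereal_sup_ubound; exists p => //; exists q.
Qed.

Lemma deltaE_ge0 {Pi : set policy} {p N} (rhoE : 'I_N -> joint) :
  (0 < N)%N -> Pi p -> 0 <= deltaE Pi rhoE.
Proof.
move=> N_gt0 Pip; pose i0 := Ordinal N_gt0.
apply: le_trans (ereal_sup_ubound _); last by exists i0 => //; exists i0.
exact: dPiPi_ge0 _ _ Pip.
Qed.

Lemma lambda_ge0 (Pi : set policy) piG N (rhoE : 'I_N -> joint) rhot
    (alpha : 'I_N -> R) :
  weights alpha -> 0 <= lambda Pi piG rhoE rhot alpha.
Proof.
move=> walpha; apply: le_ereal_inf_tmp => _ [p _ <-].
by apply: adde_ge0; [apply: weighted_sume_ge0 => // i|]; exact: eps_ge0.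
Qed.

End ExpectedTotalVariation.

Lemma ereal_inf_ge_addr (R : realType) (S : set (\bar R)) (x y : \bar R) :
  0 <= y -> (forall s, S s -> 0 <= s) -> (forall s, S s -> x <= s + y) ->
  x <= ereal_inf S + y.
Proof.
move=> y0 S0 xSy; have [->|ynoo] := eqVneq y +oo.
  by rewrite addey ?leey // gt_eqF // (lt_le_trans _ (le_ereal_inf_tmp S0)) ?ltNy0.
have yfin : y \is a fin_num by rewrite ge0_fin_numE // ltey.
by rewrite -leeBlDr //; apply: le_ereal_inf_tmp => s Ss; rewrite leeBlDr // xSy.
Qed.

Section TargetBound.
Context {d1 d2 d3 : measure_display} {X : measurableType d1}
  {G : measurableType d2} {A : measurableType d3} {R : realType}.
Local Notation policy := (X * G -> probability A R).
Local Notation joint := (probability (X * G)%type R).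
Variables (Pi : set policy) (piG : policy) (N : nat) (rhoE : 'I_N -> joint).
Hypothesis hmeas : forall p q, (Pi `|` [set piG]) p -> (Pi `|` [set piG]) q ->
  measurable_dTV p q.

Let mPi {p q} : Pi p -> Pi q -> measurable_dTV p q.
Proof. by move=> Pip Piq; apply: hmeas; left. Qed.

Let mPiG {p} : Pi p -> measurable_dTV p piG.
Proof. by move=> Pip; apply: hmeas; [left|right]. Qed.

Let mGPi {p} : Pi p -> measurable_dTV piG p.
Proof. by move=> Pip; apply: hmeas; [right|left]. Qed.

Lemma eps_le_weighted_sources {alpha : 'I_N -> R} {delta} rho {p q} :
  weights alpha -> 0 <= delta -> charset Pi delta rhoE rho -> Pi p -> Pi q ->
  eps rho p q <= \sum_(i < N) (alpha i)%:E * eps (rhoE i) p q + delta.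
Proof.
move=> walpha delta0 Brho Pip Piq.
rewrite -weighted_sumeD_cst // => [|i]; last exact: eps_ge0.
apply: le_weighted_sume => // i.
exact: le_trans (eps_le_dPiPi rho (rhoE i) Pip Piq (mPi Pip Piq)) (leeD (lexx _) (Brho i)).
Qed.

Lemma eps_le_via_piG (rho : joint) {p q} : Pi p -> Pi q ->
  eps rho p q <= eps rho p piG + eps rho q piG.
Proof.
move=> Pip Piq; rewrite [eps rho q _]epsC.
exact (eps_triangle rho (mPi Pip Piq) (mPiG Pip) (mGPi Piq)).
Qed.

Lemma eps_target_le (rhot : joint) (alpha : 'I_N -> R) delta rho pi p :
  weights alpha -> 0 <= delta -> charset Pi delta rhoE rho -> Pi pi -> Pi p ->
  eps rhot pi piG <=
    \sum_(i < N) (alpha i)%:E * eps (rhoE i) pi piG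
    + (\sum_(i < N) (alpha i)%:E * eps (rhoE i) p piG + eps rhot p piG)
    + delta + dPiPi Pi rho rhot.
Proof.
move=> walpha delta0 Brho Pipi Pip.
have via_p : eps rhot pi piG <= eps rhot pi p + eps rhot p piG.
  exact (eps_triangle rhot (mPiG Pipi) (mPi Pipi Pip) (mPiG Pip)).
have to_rho : eps rhot pi p <= eps rho pi p + dPiPi Pi rho rhot.
  by rewrite dPiPiC; exact (eps_le_dPiPi rhot rho Pipi Pip (mPi Pipi Pip)).
have to_sources := eps_le_weighted_sources rho walpha delta0 Brho Pipi Pip.
have split_sources : \sum_(i < N) (alpha i)%:E * eps (rhoE i) pi p <=
    \sum_(i < N) (alpha i)%:E * eps (rhoE i) pi piG
    + \sum_(i < N) (alpha i)%:E * eps (rhoE i) p piG.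
  rewrite -big_split /=; apply: lee_sum => i _.
  rewrite -ge0_muleDr ?eps_ge0 //; apply: lee_wpmul2l; first by rewrite lee_fin weights_ge0.
  exact: eps_le_via_piG.
have chain := le_trans via_p (leeD (le_trans to_rho
  (leeD (le_trans to_sources (leeD split_sources (lexx delta))) (lexx _))) (lexx _)).
by rewrite addeA (addeAC _ (eps rhot p piG)) (addeAC _ (eps rhot p piG)).
Qed.

End TargetBound.

Theorem proposition3 (d1 d2 d3 : measure_display) (X : measurableType d1)
  (G : measurableType d2) (A : measurableType d3) (R : realType)
  (Pi : set (X * G -> probability A R)) (piG : X * G -> probability A R)
  (N : nat) (rhoE : 'I_N -> probability (X * G)%type R)
  (rhot : probability (X * G)%type R)
  (hN : (0 < N)%N)
  (hmeas : forall p1 p2, (Pi `|` [set piG]) p1 -> (Pi `|` [set piG]) p2 ->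
     measurable_fun [set: X * G] (fun z => dTV (p1 z) (p2 z) : \bar R)) :
  forall pi, Pi pi ->
  eps rhot pi piG <=
    ereal_inf [set (\sum_(i < N) (alpha i)%:E * eps (rhoE i) pi piG)
                   + lambda Pi piG rhoE rhot alpha | alpha in @weights R N]
    + deltaE Pi rhoE
    + ereal_inf [set dPiPi Pi rho rhot | rho in charset Pi (deltaE Pi rhoE) rhoE].
Proof.
move=> pi Pipi.
have delta0 := deltaE_ge0 rhoE hN Pipi.
set dist_B := ereal_inf [set dPiPi Pi rho rhot | rho in _].
have dist_B0 : 0 <= dist_B.
  by apply: le_ereal_inf_tmp => _ [rho _ <-]; exact: dPiPi_ge0 _ _ Pipi.
have weighted_ge0 alpha p : weights alpha ->
    0 <= \sum_(i < N) (alpha i)%:E * eps (rhoE i) p piG.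
  by move=> walpha; apply: weighted_sume_ge0 => // i; exact: eps_ge0.
rewrite -addeA; apply: ereal_inf_ge_addr => [||_ [alpha walpha <-]].
- exact: adde_ge0.
- by move=> _ [alpha walpha <-]; apply: adde_ge0; [exact: weighted_ge0|exact: lambda_ge0].
rewrite (addeC (\sum_(i < N) _)) -addeA.
apply: ereal_inf_ge_addr => [||_ [p Pip <-]].
- by apply: adde_ge0; [exact: weighted_ge0|exact: adde_ge0].
- by move=> _ [p _ <-]; apply: adde_ge0; [exact: weighted_ge0|exact: eps_ge0].
rewrite addeCA 2!addeA [X in _ <= X]addeC.
apply: ereal_inf_ge_addr => [||_ [rho Brho <-]].
- apply: adde_ge0 => //; apply: adde_ge0; first exact: weighted_ge0.
  by apply: adde_ge0; [exact: weighted_ge0|exact: eps_ge0].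
- by move=> _ [rho _ <-]; exact: dPiPi_ge0 _ _ Pipi.
by rewrite [X in _ <= X]addeC; apply: eps_target_le.
Qed.
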